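(* Let $d\in\mathbb{N}^*$ and $M\in\mathbb{N}^*$. There exists a feed-forward neural network architecture $\mathcal{A}$ with $d$ input neurons, two hidden layers, $2(d+1)^2M$ weights and the Heaviside activation function, such that for any $(\alpha_i)_{1\le i\le M}\in\mathbb{R}^M$ and any collection $(\mathcal{C}_i)_{1\le i\le M}$ of mutually disjoint hypercubes of $\mathbb{R}^d$, the function $\tilde f:\mathbb{R}^d\to\mathbb{R}$ defined by $\tilde f(x)=\sum_{i=1}^M\alpha_i\mathds{1}_{\mathcal{C}_i}(x)$ belongs to $H_{\mathcal{A}}$.
   Context: A hypercube here is a cube in $\mathbb{R}^d$ with nonempty interior, bounded by $2d$ faces supported by hyperplanes, where each face may or may not belong to the cube (i.e. it is an intersection of $2d$ half-spaces $\{\langle \mathbf w_j,x\rangle+b_j\ge0\}$ or $\{\langle \mathbf w_j,x\rangle+b_j>0\}$ forming a cube). Heaviside activation: $\sigma(x)=\mathds{1}_{x\ge0}$. A feed-forward architecture is a directed acyclic graph with $d$ input nodes (in-degree $0$), a single output node (out-degree $0$); layer $0$ is the inputs, layer $\ell$ consists of nodes having a predecessor in layer $\ell-1$ and other predecessors only in earlier layers; intermediate layers are hidden layers. A real weight is attached to every edge and every non-input node; the number of weights is their total number. For weights $\mathbf w$, input neuron $v$ outputs $x_v$, each hidden neuron outputs $\sigma(\sum_{u\in P_v}w_{u\to v}y_u+w_v)$ ($P_v$ = predecessors), the output neuron outputs $\sum_{u\in P_v}w_{u\to v}y_u+w_v$; $H_{\mathcal{A}}$ is the set of all functions $\mathbb{R}^d\to\mathbb{R}$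 so computed over all weight vectors. *)

From HB Require Import structures.
From mathcomp Require Import all_boot all_order all_algebra.
From mathcomp Require Import boolp classical_sets reals numfun.
Set Implicit Arguments. Unset Strict Implicit. Unset Printing Implicit Defensive.
Import Order.TTheory GRing.Theory Num.Theory.
Local Open Scope ring_scope.
Local Open Scope classical_set_scope.

Definition heaviside {R : realType} (t : R) : R := if 0 <= t then 1 else 0.

Definition dotp {R : realType} {d : nat} (u x : 'I_d -> R) : R :=
  \sum_(k < d) u k * x k.

Definition halfsp {R : realType} (closed : bool) (t : R) : Prop :=
  if closed then 0 <= t else 0 < t.

(* A hypercube of R^d (arbitrary orientation): a cube with side s > 0, corner c,
   orthonormal edge directions u j, i.e. the intersection of the 2d half-spaces
   { <u j, x - c> >= 0 (or > 0) } and { s - <u j, x - c> >= 0 (or > 0) },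
   each face being included or not independently. *)
Definition is_hypercube {R : realType} {d : nat} (C : set ('I_d -> R)) : Prop :=
  exists (u : 'I_d -> 'I_d -> R) (c : 'I_d -> R) (s : R) (lo hi : 'I_d -> bool),
    [/\ 0 < s,
        (forall j l, dotp (u j) (u l) = (j == l)%:R) &
        (forall x, C x <->
           (forall j, halfsp (lo j) (dotp (u j) (fun k => x k - c k)) /\
                      halfsp (hi j) (s - dotp (u j) (fun k => x k - c k))))].

(* Nodes are 'I_n.+1, numbered in a topological
   order (every finite DAG admits such a numbering): nodes v < d are the d
   input nodes (input node v reads coordinate v), the last node ord_max is the
   output node. *)
Definition is_arch (d n : nat) (E : rel 'I_n.+1) : Prop :=
  [/\ (d <= n)%N,
      (forall u v, E u v -> (u < v)%N),
      (forall v : 'I_n.+1, (v < d)%N <-> (forall u, ~~ E u v)) &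
      (forall v : 'I_n.+1, v = ord_max <-> (forall w, ~~ E v w))].

Definition is_layering (d n : nat) (E : rel 'I_n.+1) (lay : 'I_n.+1 -> nat) : Prop :=
  forall v : 'I_n.+1,
    if (v < d)%N then lay v = 0%N
    else [/\ (0 < lay v)%N,
             (exists u, E u v /\ lay u = (lay v).-1) &
             (forall u, E u v -> (lay u < lay v)%N)].

(* Two hidden layers: layers 1 and 2 are the intermediate layers, the output
   node is in layer 3. *)
Definition two_hidden_layers (d n : nat) (E : rel 'I_n.+1) : Prop :=
  exists lay, is_layering d E lay /\ lay ord_max = 3%N.

(* Number of weights: one per edge and one per non-input node. *)
Definition nweights (d n : nat) (E : rel 'I_n.+1) : nat :=
  (#|[set p : 'I_n.+1 * 'I_n.+1 | E p.1 p.2]| + (n.+1 - d))%N.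

Definition in_HA {R : realType} (d n : nat) (E : rel 'I_n.+1)
    (f : ('I_d -> R) -> R) : Prop :=
  exists (w : 'I_n.+1 -> 'I_n.+1 -> R) (b : 'I_n.+1 -> R),
    forall x : 'I_d -> R, exists y : 'I_n.+1 -> R,
      [/\ (forall (v : 'I_n.+1) (hv : (v < d)%N), y v = x (Ordinal hv)),
          (forall v : 'I_n.+1, (d <= v)%N -> v != ord_max ->
              y v = heaviside (\sum_(u | E u v) w u v * y u + b v)),
          y ord_max = \sum_(u | E u ord_max) w u ord_max * y u + b ord_max &
          f x = y ord_max].

From HB Require Import structures.
From mathcomp Require Import all_boot all_order all_algebra.
From mathcomp Require Import boolp classical_sets reals numfun.
From mathcomp Require Import zify ring lra.
Import Order.TTheory GRing.Theory Num.Theory.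
Set Implicit Arguments. Unset Strict Implicit. Unset Printing Implicit Defensive.
Local Open Scope classical_set_scope.

(* A box (hypercube) is an intersection of 2d half-spaces; the indicator of {t >= 0} is the
   Heaviside unit H(t) and that of {t > 0} is 1 - H(-t).  The first hidden layer tests every
   face of every box but one, {t >= 0} say, whose affine form t goes straight to the box's
   second-layer unit.  That unit thresholds t - (s + 1) * #(violated faces), s the side length:
   while the face {s - t >= 0} opposite to the missing one holds, t <= s and any violated face
   makes the argument negative; beyond it a constant term keeps the argument positive, and
   the output unit corrects for this with the first-layer unit of that opposite face.  The
   output unit then forms sum_i alpha_i 1_(C_i).  All
   this costs 2(d+1)^2 M - M + 1 weights; M - 1 edges of weight 0 make the count exact. *)

Lemma big_option (R : Type) (idx : R) (op : Monoid.com_law idx) (T : finType)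
    (F : option T -> R) :
  \big[op/idx]_(o : option T) F o = op (F None) (\big[op/idx]_(t : T) F (Some t)).
Proof.
by rewrite ![index_enum _]unlock [@Finite.enum in LHS]unlock /= big_cons big_map.
Qed.

Lemma big_pair (T : Type) (idx : T) (op : Monoid.com_law idx) (I J : finType)
    (F : I * J -> T) :
  \big[op/idx]_(p : I * J) F p = \big[op/idx]_i \big[op/idx]_j F (i, j).
Proof. by rewrite pair_bigA; apply: eq_bigr => -[]. Qed.

Lemma in_set_pred (T : Type) (b : pred T) x : (x \in [set y | b y]) = b x.
Proof. by apply/idP/idP => [/set_mem | /mem_set]. Qed.

Lemma card_rel (T1 T2 : finType) (e : T1 -> T2 -> bool) :
  #|[set p : T1 * T2 | e p.1 p.2]| = (\sum_(u : T1) \sum_(v : T2) e u v)%N.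
Proof.
rewrite -sum1_card pair_big /= big_mkcond /=.
by apply: eq_bigr => -[u v] _; rewrite in_set_pred; case: (e u v).
Qed.

(** * Two-hidden-layer architectures *)

Section TwoHiddenLayerNetwork.

Variables (d : nat) (L1 L2 : finType) (e12 : L1 -> L2 -> bool) (e1out : pred L1).

Inductive node := input of 'I_d | hidden1 of L1 | hidden2 of L2 | output.

Definition node_code (v : node) : option (('I_d + L1) + L2) :=
  match v with
  | input k => Some (inl (inl k))
  | hidden1 p => Some (inl (inr p))
  | hidden2 q => Some (inr q)
  | output => None
  end.

Definition node_decode (c : option (('I_d + L1) + L2)) : node :=
  match c with
  | Some (inl (inl k)) => input k
  | Some (inl (inr p)) => hidden1 p
  | Some (inr q) => hidden2 q
  | None => output
  end.

Lemma node_codeK : cancel node_code node_decode. Proof. by case. Qed.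

Lemma node_decodeK : cancel node_decode node_code. Proof. by case=> [[[]|]|]. Qed.

HB.instance Definition _ := Finite.copy node (can_type node_codeK).

Lemma big_node (R : Type) (idx : R) (op : Monoid.com_law idx) (F : node -> R) :
  \big[op/idx]_(v : node) F v =
  op (op (op (\big[op/idx]_k F (input k)) (\big[op/idx]_p F (hidden1 p)))
         (\big[op/idx]_q F (hidden2 q))) (F output).
Proof.
rewrite (reindex node_decode); last first.
  by apply: onW_bij; exists node_code; [apply: node_decodeK | apply: node_codeK].
by rewrite big_option !big_sumType Monoid.mulmC.
Qed.

Definition node_edge (u v : node) : bool :=
  match u, v with
  | input _, hidden1 _ | input _, hidden2 _ | hidden2 _, output => true
  | hidden1 p, hidden2 q => e12 p q
  | hidden1 p, output => e1out p
  | _, _ => false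
  end.

Definition node_layer (v : node) : nat :=
  match v with input _ => 0 | hidden1 _ => 1 | hidden2 _ => 2 | output => 3 end.

Lemma node_edge_layer u v : node_edge u v -> node_layer u < node_layer v.
Proof. by case: u v => [?|?|?|] [?|?|?|]. Qed.

Definition net_size := (d + #|L1| + #|L2|)%N.

Definition node_pos (v : node) : nat :=
  match v with
  | input k => k
  | hidden1 p => d + enum_rank p
  | hidden2 q => d + #|L1| + enum_rank q
  | output => net_size
  end.

Definition layer_start (l : nat) : nat :=
  match l with 0 => 0 | 1 => d | 2 => d + #|L1| | 3 => net_size | _ => net_size.+1 end.

Lemma node_pos_layer v :
  layer_start (node_layer v) <= node_pos v < layer_start (node_layer v).+1.
Proof. by case: v => [k|p|q|] /=; rewrite ?leq_addr ?ltn_add2l ?ltn_ord ?leqnn. Qed.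

Lemma layer_start_mono : {homo layer_start : l m / l <= m}.
Proof.
rewrite /layer_start /net_size; move: #|L1| #|L2| => a b.
by move=> -[|[|[|[|l]]]] [|[|[|[|m]]]] //=; lia.
Qed.

Lemma node_pos_mono u v : node_layer u < node_layer v -> node_pos u < node_pos v.
Proof.
move=> /layer_start_mono luv.
have /andP[_ hu] := node_pos_layer u; have /andP[hv _] := node_pos_layer v.
exact: leq_trans hu (leq_trans luv hv).
Qed.

Lemma node_pos_inj : injective node_pos.
Proof.
move=> u v e.
have [/node_pos_mono|/node_pos_mono|] := ltngtP (node_layer u) (node_layer v); rewrite ?e ?ltnn //.
case: u v e => [k|p|q|] [k'|p'|q'|] //= e _.
- by congr input; apply: val_inj.
- by congr hidden1; apply/enum_rank_inj/val_inj/(addnI e).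
- by congr hidden2; apply/enum_rank_inj/val_inj/(addnI e).
Qed.

Definition ord_of_node (v : node) : 'I_net_size.+1 := inord (node_pos v).

Lemma node_pos_lt v : node_pos v < net_size.+1.
Proof.
have /andP[_ /leq_trans-> //] := node_pos_layer v.
by apply: (@layer_start_mono _ 4); case: v.
Qed.

Lemma ord_of_nodeE v : val (ord_of_node v) = node_pos v.
Proof. exact/inordK/node_pos_lt. Qed.

Lemma ord_of_node_inj : injective ord_of_node.
Proof. by move=> u v /(congr1 val); rewrite !ord_of_nodeE => /node_pos_inj. Qed.

Lemma card_node : #|{: node}| = net_size.+1.
Proof.
rewrite (bij_eq_card (f := node_code)); last first.
  by exists node_decode; [apply: node_codeK | apply: node_decodeK].
by rewrite card_option !card_sum card_ord.
Qed.

Lemma ord_of_node_bij : bijective ord_of_node.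
Proof. by apply: inj_card_bij ord_of_node_inj _; rewrite card_node card_ord. Qed.

Definition node_of_ord (u : 'I_net_size.+1) : node :=
  odflt output [pick v | ord_of_node v == u].

Lemma ord_of_nodeK : cancel ord_of_node node_of_ord.
Proof.
move=> v; rewrite /node_of_ord; case: pickP => [w /eqP/ord_of_node_inj -> //|].
by move/(_ v); rewrite eqxx.
Qed.

Lemma node_of_ordK : cancel node_of_ord ord_of_node.
Proof. by move=> u; have [g _ gK] := ord_of_node_bij; rewrite -(gK u) ord_of_nodeK. Qed.

Lemma ord_of_node_surj u : exists v, u = ord_of_node v.
Proof. by exists (node_of_ord u); rewrite node_of_ordK. Qed.

Lemma ord_of_node_output : ord_of_node output = ord_max.
Proof. by apply: val_inj; rewrite ord_of_nodeE. Qed.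

Lemma d_le_node_pos v : node_layer v != 0 -> d <= node_pos v.
Proof.
move=> lv; have /andP[+ _] := node_pos_layer v; apply: leq_trans.
by apply: (@layer_start_mono 1); case: v lv.
Qed.

Lemma ord_of_node_lt_d v : (ord_of_node v < d) = (node_layer v == 0).
Proof.
rewrite ord_of_nodeE; case: v => [k|p|q|]; first exact: ltn_ord.
all: by apply/negbTE; rewrite -leqNgt d_le_node_pos.
Qed.

Definition net_rel : rel 'I_net_size.+1 :=
  fun u v => node_edge (node_of_ord u) (node_of_ord v).

Lemma net_rel_ord u v : net_rel (ord_of_node u) (ord_of_node v) = node_edge u v.
Proof. by rewrite /net_rel !ord_of_nodeK. Qed.

Definition net_layer (u : 'I_net_size.+1) : nat := node_layer (node_of_ord u).

Lemma card_net_rel :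
  #|[set p | net_rel p.1 p.2]| = #|[set p : node * node | node_edge p.1 p.2]|.
Proof.
rewrite -!sum1_card (reindex (fun p => (ord_of_node p.1, ord_of_node p.2))) /=.
  by apply: eq_bigl => -[u v]; rewrite !in_set_pred /= net_rel_ord.
apply: onW_bij; exists (fun p => (node_of_ord p.1, node_of_ord p.2)) => -[u v] /=.
  by rewrite !ord_of_nodeK.
by rewrite !node_of_ordK.
Qed.

Lemma net_nweights :
  nweights d net_rel =
  (#|L1| * d.+1 + #|L2| * d.+2 + #|[set p : L1 * L2 | e12 p.1 p.2]| + #|e1out| + 1)%N.
Proof.
rewrite /nweights card_net_rel !card_rel.
under eq_bigr do rewrite big_node.
rewrite big_node /= !big_split /= !big1_eq (sum1_card L1) !(sum1_card L2).
rewrite !sum_nat_const card_ord.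
have -> : #|e1out| = (\sum_p e1out p)%N by rewrite -sum1_card big_mkcond.
(* [set] identifies the syntactically different copies of these terms for [lia]. *)
rewrite /net_size; set n1 := #|L1|; set n2 := #|L2|.
set s12 := (\sum_u \sum_v e12 u v)%N; set s1out := (\sum_p e1out p)%N; lia.
Qed.

Section Architecture.

Hypothesis d_gt0 : (0 < d)%N.
Variable q0 : L2.
Hypothesis hidden2_pred : forall q, exists p, e12 p q.
Hypothesis hidden1_succ : forall p, e1out p || [exists q, e12 p q].

Lemma node_edge_pred v :
  node_layer v != 0%N -> exists2 u, node_edge u v & node_layer u = (node_layer v).-1.
Proof.
case: v => [k|p|q|] //= _.
- by exists (input (Ordinal d_gt0)).
- by have [p epq] := hidden2_pred q; exists (hidden1 p).
- by exists (hidden2 q0).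
Qed.

Lemma node_edge_succ u : u != output -> exists v, node_edge u v.
Proof.
case: u => [k|p|q|] //= _.
- by exists (hidden2 q0).
- case/orP: (hidden1_succ p) => [e1p | /existsP[q epq]]; first by exists output.
  by exists (hidden2 q).
- by exists output.
Qed.

Lemma net_arch : is_arch d net_rel.
Proof.
split.
- by rewrite /net_size -addnA leq_addr.
- move=> u v; have [a ->] := ord_of_node_surj u; have [b ->] := ord_of_node_surj v.
  by rewrite net_rel_ord !ord_of_nodeE => /node_edge_layer/node_pos_mono.
- move=> v; have [b ->] := ord_of_node_surj v; rewrite ord_of_node_lt_d.
  split=> [/eqP lb u | no_pred]; first have [a ->] := ord_of_node_surj u.
    by rewrite net_rel_ord; apply/negP => /node_edge_layer; rewrite lb.
  apply/negPn/negP => /node_edge_pred[a eab _].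
  by have := no_pred (ord_of_node a); rewrite net_rel_ord eab.
- move=> v; have [a ->] := ord_of_node_surj v; rewrite -ord_of_node_output.
  split=> [-> w | no_succ].
    by have [b ->] := ord_of_node_surj w; rewrite net_rel_ord; case: b.
  congr ord_of_node; apply/eqP/negPn/negP => /node_edge_succ[b eab].
  by have := no_succ (ord_of_node b); rewrite net_rel_ord eab.
Qed.

Lemma net_layering : is_layering d net_rel net_layer.
Proof.
move=> v; have [b ->] := ord_of_node_surj v.
rewrite ord_of_node_lt_d /net_layer ord_of_nodeK; case: eqP => [-> // | /eqP lb].
split; first by rewrite lt0n.
- have [a eab la] := node_edge_pred lb.
  by exists (ord_of_node a); rewrite net_rel_ord ord_of_nodeK.
- move=> u; have [a ->] := ord_of_node_surj u.
  by rewrite net_rel_ord ord_of_nodeK => /node_edge_layer.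
Qed.

Lemma net_two_hidden_layers : two_hidden_layers d net_rel.
Proof.
exists net_layer; split; first exact: net_layering.
by rewrite /net_layer -ord_of_node_output ord_of_nodeK.
Qed.

End Architecture.

Section Evaluation.

Variable R : realType.
Local Open Scope ring_scope.

Record net_weights := NetWeights {
  w_in1 : L1 -> 'I_d -> R; b_1 : L1 -> R;
  w_in2 : L2 -> 'I_d -> R; w_12 : L1 -> L2 -> R; b_2 : L2 -> R;
  w_1out : L1 -> R; w_2out : L2 -> R; b_out : R }.

Variable W : net_weights.
Hypothesis w_12_edge : forall p q, ~~ e12 p q -> w_12 W p q = 0.
Hypothesis w_1out_edge : forall p, ~~ e1out p -> w_1out W p = 0.

Definition hidden1_val (x : 'I_d -> R) p :=
  heaviside (\sum_k w_in1 W p k * x k + b_1 W p).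

Definition hidden2_val (x : 'I_d -> R) q :=
  heaviside (\sum_k w_in2 W q k * x k + \sum_p w_12 W p q * hidden1_val x p + b_2 W q).

Definition net_eval (x : 'I_d -> R) :=
  \sum_p w_1out W p * hidden1_val x p + \sum_q w_2out W q * hidden2_val x q + b_out W.

Definition node_weight (u v : node) : R :=
  match u, v with
  | input k, hidden1 p => w_in1 W p k
  | input k, hidden2 q => w_in2 W q k
  | hidden1 p, hidden2 q => w_12 W p q
  | hidden1 p, output => w_1out W p
  | hidden2 q, output => w_2out W q
  | _, _ => 0
  end.

Definition node_bias (v : node) : R :=
  match v with
  | input _ => 0 | hidden1 p => b_1 W p | hidden2 q => b_2 W q | output => b_out W
  end.

Definition node_val (x : 'I_d -> R) (v : node) : R :=
  match v with
  | input k => x k | hidden1 p => hidden1_val x p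
  | hidden2 q => hidden2_val x q | output => net_eval x
  end.

Lemma node_weight_edge u v : ~~ node_edge u v -> node_weight u v = 0.
Proof.
case: u v => [?|?|?|] [?|?|?|] //=; first exact: w_12_edge.
exact: w_1out_edge.
Qed.

Lemma sum_node_edge x v :
  \sum_(u | node_edge u v) node_weight u v * node_val x u =
  \sum_u node_weight u v * node_val x u.
Proof.
rewrite big_mkcond; apply: eq_bigr => u _.
by case: ifP => // /negbT/node_weight_edge ->; rewrite mul0r.
Qed.

Lemma node_valE x v : node_layer v != 0 ->
  node_val x v = (if v is output then id else heaviside)
    (\sum_(u | node_edge u v) node_weight u v * node_val x u + node_bias v).
Proof.
move=> lv; rewrite sum_node_edge big_node; case: v lv => [k|p|q|] //= _.
all: by rewrite !(big1 _ _ _ (fun _ _ => mul0r _)) ?mul0r ?addr0 ?add0r.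
Qed.

Lemma net_in_HA : in_HA net_rel net_eval.
Proof.
exists (fun u v => node_weight (node_of_ord u) (node_of_ord v)).
exists (fun v => node_bias (node_of_ord v)) => x. exists (fun v => node_val x (node_of_ord v)).
have sum_rel v : \sum_(u | net_rel u (ord_of_node v))
    node_weight (node_of_ord u) v * node_val x (node_of_ord u) =
  \sum_(u | node_edge u v) node_weight u v * node_val x u.
  rewrite (reindex ord_of_node) /=; last exact/onW_bij/ord_of_node_bij.
  by apply: eq_big => u; rewrite ?net_rel_ord ?ord_of_nodeK.
split.
- move=> v hv; suff -> : node_of_ord v = input (Ordinal hv) by [].
  by apply: ord_of_node_inj; apply: val_inj; rewrite node_of_ordK ord_of_nodeE.
- move=> v; have [a ->] := ord_of_node_surj v.
  rewrite leqNgt ord_of_node_lt_d -ord_of_node_output (inj_eq ord_of_node_inj).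
  by rewrite ord_of_nodeK sum_rel => la; rewrite (node_valE _ la); case: a la.
- by rewrite -ord_of_node_output ord_of_nodeK sum_rel node_valE.
- by rewrite -ord_of_node_output ord_of_nodeK.
Qed.

End Evaluation.

End TwoHiddenLayerNetwork.

Local Open Scope ring_scope.

(** * Indicators of slabs and boxes *)

Section HalfSpaces.

Variable R : realType.

Definition halfspb (c : bool) (t : R) : bool := if c then 0 <= t else 0 < t.

Lemma halfspE c t : halfsp c t = halfspb c t.
Proof. by case: c. Qed.

Lemma halfspb_gt0 c t : 0 < t -> halfspb c t.
Proof. by case: c => //= /ltW. Qed.

Lemma halfspb_lt0 c t : t < 0 -> halfspb c t = false.
Proof. by case: c => /= t_lt0; [rewrite leNgt t_lt0 | rewrite ltNge (ltW t_lt0)]. Qed.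

Lemma halfspb_heaviside c t :
  ((halfspb c t)%:R : R) = (~~ c)%:R + (-1) ^+ (~~ c) * heaviside ((-1) ^+ (~~ c) * t).
Proof.
rewrite /heaviside; case: c => /=; rewrite ?mul1r ?add0r ?mulN1r; first by case: (0 <= t).
by rewrite oppr_ge0 ltNge; case: (t <= 0); rewrite /= ?mulr1 ?mulr0 ?subrr ?subr0.
Qed.

(* Inside the slab [t <= s], so each violated constraint [p f] pushes the argument below [0];
   beyond the far face of the slab the last term keeps it positive. *)
Lemma slab_indicator (F : finType) (p : pred F) (c c' : bool) (t s : R) : 0 < s ->
  ((halfspb c t && halfspb c' (s - t) && [forall f, p f])%:R : R) =
  (halfspb c (t - (s + 1) * \sum_f (~~ p f)%:R
                + (s + 1) * #|F|%:R * (~~ halfspb c' (s - t))%:R))%:R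
  + (halfspb c' (s - t))%:R - 1.
Proof.
move=> s_gt0; set n := \sum_f (~~ p f)%:R.
have n_ge0 : 0 <= n by apply: sumr_ge0 => f _; rewrite ler0n.
have n_le : n <= #|F|%:R.
  by rewrite -sum1_card natr_sum; apply: ler_sum => f _; rewrite lern1 leq_b1.
case g: (halfspb c' (s - t)) => /=.
  have t_le : t <= s by move: g; case: c' => /= h; lra.
  have [allp | /forallPn[f npf]] := boolP [forall f, p f].
    have -> : n = 0 by apply: big1 => f _; rewrite (forallP allp).
    by rewrite !andbT mulr0 subr0 mulr0 addr0 addrK.
  have n_ge1 : 1 <= n by rewrite /n (bigD1 f) //= npf lerDl sumr_ge0 // => ? _; rewrite ler0n.
  have Kn : s + 1 <= (s + 1) * n by rewrite ler_peMr //; lra.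
  by rewrite andbF /= mulr0 addr0 halfspb_lt0 ?addrK //; lra.
have t_ge : s <= t by move: g; case: c' => /= /negbT; rewrite -?ltNge -?leNgt => h; lra.
have Kn : 0 <= (s + 1) * #|F|%:R - (s + 1) * n by rewrite -mulrBr mulr_ge0 ?subr_ge0 //; lra.
by rewrite andbF /= mulr1 halfspb_gt0 ?addr0 ?subrr //; lra.
Qed.

End HalfSpaces.

Lemma dotpB (R : realType) (d : nat) (u x c : 'I_d -> R) :
  dotp u (fun k => x k - c k) = dotp u x - dotp u c.
Proof. by rewrite /dotp -sumrB; apply: eq_bigr => k _; rewrite mulrBr. Qed.

Section Boxes.

Variables (R : realType) (d : nat).

(* The data of [is_hypercube] without orthonormality, which the construction never uses. *)
Record box := Box {
  box_dir : 'I_d -> 'I_d -> R;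
  box_corner : 'I_d -> R;
  box_side : R;
  box_lo : 'I_d -> bool;
  box_hi : 'I_d -> bool }.

Definition box_coord (B : box) j (x : 'I_d -> R) : R :=
  dotp (box_dir B j) (fun k => x k - box_corner B k).

Definition face_form (B : box) (f : 'I_d * bool) (x : 'I_d -> R) : R :=
  if f.2 then box_side B - box_coord B f.1 x else box_coord B f.1 x.

Definition face_closed (B : box) (f : 'I_d * bool) : bool :=
  if f.2 then box_hi B f.1 else box_lo B f.1.

Definition in_face (B : box) f x : bool := halfspb (face_closed B f) (face_form B f x).

Definition box_set (B : box) : set ('I_d -> R) := [set x | [forall f, in_face B f x]].

Lemma hypercube_box (C : set ('I_d -> R)) :
  is_hypercube C -> exists2 B, 0 < box_side B & C = box_set B.
Proof.
case=> u [c [s [lo [hi [s_gt0 _ HC]]]]]; exists (Box u c s lo hi) => //.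
rewrite predeqE => x; rewrite HC; split=> [H | /forallP H j].
  by apply/forallP => -[j []]; rewrite /in_face /= -halfspE; case: (H j).
by rewrite !halfspE; split; [exact: (H (j, false)) | exact: (H (j, true))].
Qed.

Definition face_weight (B : box) (f : 'I_d * bool) k : R := (-1) ^+ f.2 * box_dir B f.1 k.

Definition face_bias (B : box) (f : 'I_d * bool) : R :=
  if f.2 then box_side B + dotp (box_dir B f.1) (box_corner B)
  else - dotp (box_dir B f.1) (box_corner B).

Lemma face_formE B f x : face_form B f x = \sum_k face_weight B f k * x k + face_bias B f.
Proof.
under eq_bigr do rewrite -mulrA.
rewrite -mulr_sumr /face_form /face_bias /box_coord dotpB -/(dotp _ x).
by case: f.2; rewrite ?expr0 ?expr1 ?mul1r ?mulN1r; ring.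
Qed.

End Boxes.

(** * The network of a family of boxes *)

Section BoxNetwork.

Variables (R : realType) (d M : nat).

Definition top_face : 'I_d.+1 * bool := (ord0, true).
Definition bottom_face : 'I_d.+1 * bool := (ord0, false).
Definition side_face (f : 'I_d * bool) : 'I_d.+1 * bool := (lift ord0 f.1, f.2).

Lemma in_box_setE (B : box R d.+1) x : (x \in box_set B) =
  [&& in_face B bottom_face x, in_face B top_face x & [forall f, in_face B (side_face f) x]].
Proof.
rewrite /box_set in_set_pred.
apply/forallP/and3P => [H | [bot top /forallP side] [j b]].
  by split; [exact: H | exact: H | apply/forallP => f; exact: H].
by case: (unliftP ord0 j) => [k ->|->]; [exact: side (k, b) | case: b].
Qed.

Definition box_gap (B : box R d.+1) : R := box_side B + 1.

Definition nsides : R := #|{: 'I_d * bool}|%:R.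

Definition box_arg (B : box R d.+1) x : R :=
  face_form B bottom_face x - box_gap B * \sum_f (~~ in_face B (side_face f) x)%:R
  + box_gap B * nsides * (~~ in_face B top_face x)%:R.

Lemma box_indicator (B : box R d.+1) x : 0 < box_side B ->
  (\1_(box_set B) x : R) =
  (halfspb (box_lo B ord0) (box_arg B x))%:R + (in_face B top_face x)%:R - 1.
Proof. by move=> s_gt0; rewrite indicE in_box_setE andbA; apply: slab_indicator. Qed.

(* First-layer unit [(i, None)] tests the top face of box [i] and [(i, Some f)] its side
   face [f]; the bottom faces have no unit of their own. *)
Definition box_unit := ('I_M.+1 * option ('I_d * bool))%type.

Definition unit_face (o : option ('I_d * bool)) : 'I_d.+1 * bool :=
  if o is Some f then side_face f else top_face.

(* The [M] edges from the top-face unit of box [0] to the other boxes get weight [0]; they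
   only pad the number of weights to the value of [box_nweights]. *)
Definition box_e12 (p : box_unit) (i : 'I_M.+1) : bool :=
  (p.1 == i) || (p == (ord0, None)).

Definition box_e1out (p : box_unit) : bool := p.2 == None.

Definition box_rel := @net_rel d.+1 _ _ box_e12 box_e1out.

Lemma box_arch : is_arch d.+1 box_rel.
Proof.
apply: (net_arch _ ord0) => // [i|p].
  by exists (i, None); rewrite /box_e12 eqxx.
by apply/orP; right; apply/existsP; exists p.1; rewrite /box_e12 eqxx.
Qed.

Lemma box_two_hidden_layers : two_hidden_layers d.+1 box_rel.
Proof.
apply: (net_two_hidden_layers _ _ ord0) => // i.
by exists (i, None); rewrite /box_e12 eqxx.
Qed.

Lemma card_box_e12 :
  #|[set p : box_unit * 'I_M.+1 | box_e12 p.1 p.2]| = (#|{: box_unit}| + M)%N.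
Proof.
rewrite card_rel (bigD1 (ord0, None)) // /box_e12.
rewrite (eq_bigr (fun _ => 1%N)) => [|i _]; last by rewrite eqxx orbT.
rewrite sum1_card card_ord (eq_bigr (fun _ => 1%N)) => [|p /negbTE np0].
  by rewrite sum1_card cardC1 card_prod card_option card_prod !card_ord card_bool /=; lia.
rewrite np0 (bigD1 p.1) //= eqxx big1 // => i.
by rewrite orbF eq_sym => /negbTE ->.
Qed.

Lemma card_box_e1out : #|box_e1out| = M.+1.
Proof.
rewrite -sum1_card big_mkcond big_pair (eq_bigr (fun _ => 1%N)) ?sum1_card ?card_ord //.
by move=> i _; rewrite big_option big1.
Qed.

Lemma box_nweights : nweights d.+1 box_rel = (2 * d.+2 ^ 2 * M.+1)%N.
Proof.
rewrite net_nweights card_box_e12 card_box_e1out.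
by rewrite card_prod card_option card_prod !card_ord card_bool /=; lia.
Qed.

Section Weights.

Variables (B : 'I_M.+1 -> box R d.+1) (alpha : 'I_M.+1 -> R).

Local Notation sgn c := ((-1) ^+ (~~ c) : R).

Definition unit_closed (p : box_unit) : bool := face_closed (B p.1) (unit_face p.2).

Definition lo_closed (i : 'I_M.+1) : bool := box_lo (B i) ord0.

Definition box_weights : net_weights d.+1 box_unit 'I_M.+1 R := {|
  w_in1 p k := sgn (unit_closed p) * face_weight (B p.1) (unit_face p.2) k;
  b_1 p := sgn (unit_closed p) * face_bias (B p.1) (unit_face p.2);
  w_in2 i k := sgn (lo_closed i) * face_weight (B i) bottom_face k;
  w_12 p i := if p.1 == i then
      sgn (lo_closed i) * box_gap (B i) * sgn (unit_closed p)
      * (if p.2 is Some _ then 1 else - nsides)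
    else 0;
  b_2 i := sgn (lo_closed i) *
    (face_bias (B i) bottom_face
     - box_gap (B i) * \sum_f (unit_closed (i, Some f))%:R
     + box_gap (B i) * nsides * (unit_closed (i, None))%:R);
  w_1out p := if p.2 is None then alpha p.1 * sgn (unit_closed p) else 0;
  w_2out i := alpha i * sgn (lo_closed i);
  b_out := \sum_i alpha i * ((~~ lo_closed i)%:R + (~~ unit_closed (i, None))%:R - 1) |}.

Lemma box_hidden1 x p : hidden1_val box_weights x p =
  heaviside (sgn (unit_closed p) * face_form (B p.1) (unit_face p.2) x).
Proof.
rewrite /hidden1_val face_formE mulrDr mulr_sumr /=.
by congr (heaviside (_ + _)); apply: eq_bigr => k _; rewrite mulrA.
Qed.

Lemma in_unit_face x p : (in_face (B p.1) (unit_face p.2) x)%:R =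
  (~~ unit_closed p)%:R + sgn (unit_closed p) * hidden1_val box_weights x p.
Proof. by rewrite box_hidden1 -halfspb_heaviside. Qed.

Lemma notin_unit_face x p : (~~ in_face (B p.1) (unit_face p.2) x)%:R =
  (unit_closed p)%:R - sgn (unit_closed p) * hidden1_val box_weights x p.
Proof.
have -> : forall b : bool, (~~ b)%:R = 1 - b%:R :> R by case; rewrite ?subr0 ?subrr.
rewrite in_unit_face.
by case: (unit_closed p); rewrite /= ?subr0 ?add0r ?opprD ?addrA ?subrr ?add0r.
Qed.

Lemma sum_notin_side x i : \sum_f (~~ in_face (B i) (side_face f) x)%:R =
  \sum_f (unit_closed (i, Some f))%:R
  - \sum_f sgn (unit_closed (i, Some f)) * hidden1_val box_weights x (i, Some f).
Proof.
rewrite -sumrB; apply: eq_bigr => f _.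
by have /= -> := notin_unit_face x (i, Some f).
Qed.

Lemma box_hidden2 x i :
  hidden2_val box_weights x i = heaviside (sgn (lo_closed i) * box_arg (B i) x).
Proof.
rewrite /hidden2_val /= big_pair (bigD1 i) //= [X in _ + (_ + X)]big1 ?addr0; last first.
  by move=> j /negbTE ji; apply: big1 => o _; rewrite ji mul0r.
rewrite eqxx big_option /= /box_arg face_formE (notin_unit_face x (i, None)) sum_notin_side.
set s0 := sgn (lo_closed i); set K := box_gap (B i); set h := hidden1_val box_weights x.
have -> : \sum_k s0 * face_weight (B i) bottom_face k * x k =
          s0 * \sum_k face_weight (B i) bottom_face k * x k.
  by rewrite mulr_sumr; apply: eq_bigr => k _; rewrite mulrA.
have -> : \sum_f s0 * K * sgn (unit_closed (i, Some f)) * 1 * h (i, Some f) =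
          s0 * K * \sum_f sgn (unit_closed (i, Some f)) * h (i, Some f).
  by rewrite mulr_sumr; apply: eq_bigr => f _; rewrite mulr1 mulrA.
by congr heaviside; ring.
Qed.

Lemma box_net_eval x : (forall i, 0 < box_side (B i)) ->
  net_eval box_weights x = \sum_i alpha i * \1_(box_set (B i)) x.
Proof.
move=> side_gt0; rewrite /net_eval /= big_pair.
rewrite (eq_bigr (fun i =>
    alpha i * sgn (unit_closed (i, None)) * hidden1_val box_weights x (i, None))); last first.
  by move=> i _; rewrite big_option /= big1 ?addr0 // => f _; rewrite mul0r.
rewrite -!big_split /=; apply: eq_bigr => i _.
rewrite box_indicator // halfspb_heaviside -/(lo_closed i) -box_hidden2.
by rewrite (in_unit_face x (i, None)) /=; ring.
Qed.

Lemma box_in_HA : (forall i, 0 < box_side (B i)) ->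
  in_HA box_rel (fun x => \sum_i alpha i * \1_(box_set (B i)) x).
Proof.
move=> side_gt0; rewrite -(funext (fun x => box_net_eval x side_gt0)).
apply: net_in_HA => [p i | p].
  by rewrite /box_e12 /= negb_or => /andP[/negbTE -> _].
by rewrite /box_e1out /=; case: p.2.
Qed.

End Weights.

End BoxNetwork.

Unset Implicit Arguments.

Theorem proposition10 (R : realType) (d M : nat) :
  (0 < d)%N -> (0 < M)%N ->
  exists (n : nat) (E : rel 'I_n.+1),
    [/\ is_arch d E, two_hidden_layers d E,
        nweights d E = (2 * d.+1 ^ 2 * M)%N &
        forall (alpha : 'I_M -> R) (C : 'I_M -> set ('I_d -> R)),
          (forall i, is_hypercube (C i)) ->
          (forall i j, i != j -> C i `&` C j = set0) ->
          in_HA E (fun x => \sum_(i < M) alpha i * \1_(C i) x)].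
Proof.
case: d => // d _; case: M => // M _.
exists _, (@box_rel d M).
split; [exact: box_arch | exact: box_two_hidden_layers | exact: box_nweights |].
move=> alpha C cubes _.
have /choice[B HB] : forall i, exists B : box R d.+1, 0 < box_side B /\ C i = box_set B.
  by move=> i; have [Bi side_gt0 ->] := hypercube_box (cubes i); exists Bi.
have -> : C = fun i => box_set (B i) by apply: funext => i; case: (HB i).
by apply: box_in_HA => i; case: (HB i).
Qed.
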